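(* Let $(L,I)$ and $(M,J)$ be integral systems on sets $X$ and $Y$ respectively, let $\rho:X\to[0,\infty)$ and let $\phi:X\to Y$ be a map such that $\rho\cdot(g\circ\phi)\in L$ and $I(\rho\cdot(g\circ\phi))=J(g)$ for every $g\in M$. Then for every $g\in M^1$ one has $\rho\cdot(g\circ\phi)\in L^1$ and $I^1(\rho\cdot(g\circ\phi))=J^1(g)$.
   Context: An integral system $(L,I)$ on a set $X$ consists of a linear lattice $L$ (a real vector space of real-valued functions on $X$ closed under pointwise $\max$ and $\min$) and a preintegral $I$ (a positive linear functional on $L$ with $I(f_n)\to0$ whenever $f_n\in L$, $f_n\downarrow0$ pointwise). $L_\uparrow$ (resp. $L_\downarrow$) is the set of $f:X\to(-\infty,\infty]$ (resp. $[-\infty,\infty)$) that are pointwise limits of increasing (resp. decreasing) sequences $f_n\in L$, with $I_\uparrow(f)$ (resp. $I_\downarrow(f)$) $=\lim I(f_n)$. Upper and lower integrals: $\overline I(f)=\inf\{I_\uparrow(g):g\in L_\uparrow,f\le g\}$, $\underline I(f)=\sup\{I_\downarrow(g):g\in L_\downarrow,g\le f\}$. A function $f:X\to\mathbb R$ is integrable if $\underline I(f)=\overline I(f)\in\mathbb R$; $L^1$ is the set of integrable functions and $I^1(f)$ the common value (Daniell extension). $(M^1,J^1)$ is defined in the same way from $(M,J)$. Convention: $0\cdot(\pm\infty)=0$. *)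

From HB Require Import structures.
From mathcomp Require Import all_boot all_order all_algebra.
From mathcomp Require Import all_classical all_reals.
From mathcomp Require Import ereal topology normedtype sequences.
Set Implicit Arguments. Unset Strict Implicit. Unset Printing Implicit Defensive.
Import Order.TTheory GRing.Theory Num.Theory numFieldNormedType.Exports.
Local Open Scope classical_set_scope.
Local Open Scope ring_scope.

Section Daniell.
Context {R : realType} {X : Type}.

Definition linear_lattice (L : set (X -> R)) : Prop :=
  [/\ L (fun _ => 0),
      (forall f g, L f -> L g -> L (fun x => f x + g x)),
      (forall (a : R) f, L f -> L (fun x => a * f x)),
      (forall f g, L f -> L g -> L (fun x => Num.max (f x) (g x))) &
      (forall f g, L f -> L g -> L (fun x => Num.min (f x) (g x)))].

Definition preintegral (L : set (X -> R)) (I : (X -> R) -> R) : Prop :=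
  [/\ (forall f g, L f -> L g -> I (fun x => f x + g x) = I f + I g),
      (forall (a : R) f, L f -> I (fun x => a * f x) = a * I f),
      (forall f, L f -> (forall x, 0 <= f x) -> 0 <= I f) &
      (forall fn : nat -> X -> R, (forall n, L (fn n)) ->
         (forall x n, fn n.+1 x <= fn n x) ->
         (forall x, (fun n => fn n x) @ \oo --> (0 : R)) ->
         (fun n => I (fn n)) @ \oo --> (0 : R))].

Definition integral_system (L : set (X -> R)) (I : (X -> R) -> R) : Prop :=
  linear_lattice L /\ preintegral L I.

Definition up_seq (L : set (X -> R)) (g : X -> \bar R) (fn : nat -> X -> R) :=
  [/\ (forall n, L (fn n)), (forall x n, fn n x <= fn n.+1 x) &
      (forall x, (fun n => (fn n x)%:E) @ \oo --> g x)].

Definition down_seq (L : set (X -> R)) (g : X -> \bar R) (fn : nat -> X -> R) :=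
  [/\ (forall n, L (fn n)), (forall x n, fn n.+1 x <= fn n x) &
      (forall x, (fun n => (fn n x)%:E) @ \oo --> g x)].

Definition Lup (L : set (X -> R)) : set (X -> \bar R) :=
  [set g | exists fn, up_seq L g fn].
Definition Ldown (L : set (X -> R)) : set (X -> \bar R) :=
  [set g | exists fn, down_seq L g fn].

(* I_up(g) = lim I(f_n); independent of the chosen sequence (standard
   Daniell theory), so we take the (common) value as an infimum. *)
Definition Iup (L : set (X -> R)) (I : (X -> R) -> R) (g : X -> \bar R) : \bar R :=
  ereal_inf [set lim ((fun n => (I (fn n))%:E) @ \oo) | fn in up_seq L g].
Definition Idown (L : set (X -> R)) (I : (X -> R) -> R) (g : X -> \bar R) : \bar R :=
  ereal_sup [set lim ((fun n => (I (fn n))%:E) @ \oo) | fn in down_seq L g].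

Local Open Scope ereal_scope.

Definition upper_integral L I (f : X -> \bar R) : \bar R :=
  ereal_inf [set Iup L I g | g in [set g | Lup L g /\ forall x, f x <= g x]].
Definition lower_integral L I (f : X -> \bar R) : \bar R :=
  ereal_sup [set Idown L I g | g in [set g | Ldown L g /\ forall x, g x <= f x]].

Definition integrable L I (f : X -> R) : Prop :=
  lower_integral L I (fun x => (f x)%:E) = upper_integral L I (fun x => (f x)%:E)
  /\ upper_integral L I (fun x => (f x)%:E) \is a fin_num.

Definition L1 L I : set (X -> R) := [set f | integrable L I f].

Definition I1 L I (f : X -> R) : R := fine (upper_integral L I (fun x => (f x)%:E)).

End Daniell.

From mathcomp Require Import all_boot all_order all_algebra.
From mathcomp Require Import all_classical all_reals.
From mathcomp Require Import ereal topology normedtype sequences.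
From mathcomp Require Import lra.
Set Implicit Arguments. Unset Strict Implicit. Unset Printing Implicit Defensive.
Import Order.TTheory GRing.Theory Num.Theory numFieldNormedType.Exports.
Local Open Scope classical_set_scope.
Local Open Scope ring_scope.

(* Transfer of Daniell integrability along a weighted pullback
   T g := rho * (g \o phi).

   Because rho >= 0, T maps increasing (resp. decreasing) sequences of M to
   increasing (resp. decreasing) sequences of L converging to the pullback of
   the limit, and by hypothesis it preserves the integrals of the terms.
   Hence T is monotone on upper and lower integrals in the favourable
   direction:
       upper(L, I)(T g) <= upper(M, J)(g),   lower(M, J)(g) <= lower(L, I)(T g).
   The only genuine piece of Daniell theory needed is the inequality
   lower <= upper for a single integral system (L, I); it comes from the
   continuity of I along the decreasing sequence max(g_n - h_n, 0), where g_n
   decreases below f and h_n increases above f.  Squeezing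
       lower(M)(g) <= lower(L)(T g) <= upper(L)(T g) <= upper(M)(g)
   between the two equal, finite integrals of an integrable g proves the
   theorem. *)

Section MonotoneSequences.
Variable R : realType.

Lemma nonincreasing_limE (u : nat -> R) (l : \bar R) :
  (forall n, u n.+1 <= u n) -> (fun n => (u n)%:E) @ \oo --> l ->
  l = ereal_inf (range (fun n => (u n)%:E)).
Proof.
move=> u_dec u_l.
have u_inf : (fun n => (u n)%:E) @ \oo --> ereal_inf (range (fun n => (u n)%:E)).
  apply: ereal_nonincreasing_cvgn => n m nm; rewrite lee_fin.
  by move: n m nm; apply/nonincreasing_seqP.
by rewrite -(cvg_lim _ u_l) // (cvg_lim _ u_inf).
Qed.

Lemma nondecreasing_limE (u : nat -> R) (l : \bar R) :
  (forall n, u n <= u n.+1) -> (fun n => (u n)%:E) @ \oo --> l ->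
  l = ereal_sup (range (fun n => (u n)%:E)).
Proof.
move=> u_inc u_l.
have u_sup : (fun n => (u n)%:E) @ \oo --> ereal_sup (range (fun n => (u n)%:E)).
  apply: ereal_nondecreasing_cvgn => n m nm; rewrite lee_fin.
  by move: n m nm; apply/nondecreasing_seqP.
by rewrite -(cvg_lim _ u_l) // (cvg_lim _ u_sup).
Qed.

Lemma positive_gap_cvg0 (a b : nat -> R) (la lb : \bar R) (c : R) :
  (forall n, a n.+1 <= a n) -> (forall n, b n <= b n.+1) ->
  (fun n => (a n)%:E) @ \oo --> la -> (fun n => (b n)%:E) @ \oo --> lb ->
  (la <= c%:E)%E -> (c%:E <= lb)%E ->
  (fun n => Num.max (a n - b n) 0) @ \oo --> (0 : R).
Proof.
move=> a_dec b_inc a_la b_lb la_c c_lb.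
have a_homo : {homo a : n m / (n <= m)%N >-> m <= n}.
  exact/nonincreasing_seqP.
have b_homo : {homo b : n m / (n <= m)%N >-> n <= m}.
  exact/nondecreasing_seqP.
apply/cvgrPdist_lt => e e0; have e20 : 0 < e / 2 by rewrite divr_gt0.
have : (la < (c + e / 2)%:E)%E by apply: le_lt_trans la_c _; rewrite lte_fin ltrDl.
rewrite (nonincreasing_limE a_dec a_la) => /ereal_inf_lt[_ [n1 _ <-]].
rewrite lte_fin => a_n1.
have : ((c - e / 2)%:E < lb)%E by apply: lt_le_trans c_lb; rewrite lte_fin gtrDl oppr_lt0.
rewrite (nondecreasing_limE b_inc b_lb) => /ereal_sup_gt[_ [n2 _ <-]].
rewrite lte_fin => b_n2.
exists (maxn n1 n2) => // m /= le_m.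
have a_m : a m <= a n1 by apply: a_homo; apply: leq_trans le_m; exact: leq_maxl.
have b_m : b n2 <= b m by apply: b_homo; apply: leq_trans le_m; exact: leq_maxr.
rewrite sub0r normrN ger0_norm ?le_max ?lexx ?orbT // gt_max e0 andbT.
have -> : e = c + e / 2 - (c - e / 2) by lra.
by apply: ltr_leB; [exact: le_lt_trans a_n1 | exact: ltW (lt_le_trans b_n2 b_m)].
Qed.

Lemma lim_le_up_to_null (u v w : nat -> R) :
  (forall n, u n.+1 <= u n) -> (forall n, v n <= v n.+1) ->
  w @ \oo --> (0 : R) -> (forall n, u n <= v n + w n) ->
  (lim ((fun n => (u n)%:E) @ \oo) <= lim ((fun n => (v n)%:E) @ \oo))%E.
Proof.
move=> u_dec v_inc w0 uvw.
have u_cvg : cvg ((fun n => (u n)%:E) @ \oo).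
  apply/cvgP; apply: ereal_nonincreasing_cvgn => n m nm; rewrite lee_fin.
  by move: n m nm; apply/nonincreasing_seqP.
have v_cvg : (fun n => (v n)%:E) @ \oo --> ereal_sup (range (fun n => (v n)%:E)).
  apply: ereal_nondecreasing_cvgn => n m nm; rewrite lee_fin.
  by move: n m nm; apply/nondecreasing_seqP.
have vw_cvg : (fun n => (v n)%:E + (w n)%:E)%E @ \oo -->
    (ereal_sup (range (fun n => (v n)%:E)) + 0)%E.
  apply: cvgeD v_cvg _; first exact: fin_num_adde_defl.
  by apply: cvg_EFin => //; exact: nearW.
rewrite (cvg_lim _ v_cvg) // -[X in (_ <= X)%E]adde0 -(cvg_lim _ vw_cvg) //.
apply: lee_lim => //; first exact: cvgP vw_cvg.
by apply: nearW => n; rewrite -EFinD lee_fin.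
Qed.

End MonotoneSequences.

Section LowerLeUpper.
Variables (R : realType) (X : Type) (L : set (X -> R)) (I : (X -> R) -> R).
Hypothesis HLI : integral_system L I.

Lemma L_sub f g : L f -> L g -> L (fun x => f x - g x).
Proof.
case: HLI => [[_ Ladd Lscale _ _] _] Lf Lg.
have := Ladd _ _ Lf (Lscale (-1) g Lg).
by under eq_fun do rewrite mulN1r.
Qed.

Lemma I_sub f g : L f -> L g -> I (fun x => f x - g x) = I f - I g.
Proof.
case: HLI => [[_ _ Lscale _ _] [Iadd Iscale _ _]] Lf Lg.
have := Iadd _ _ Lf (Lscale (-1) g Lg); rewrite Iscale // mulN1r.
by under eq_fun do rewrite mulN1r.
Qed.

Lemma I_le f g : L f -> L g -> (forall x, f x <= g x) -> I f <= I g.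
Proof.
case: HLI => [_ [_ _ Ipos _]] Lf Lg fg.
rewrite -subr_ge0 -I_sub //; apply: Ipos; first exact: L_sub.
by move=> x; rewrite subr_ge0.
Qed.

(* The defect is controlled by I(max(g_n - h_n, 0)), which
   tends to 0 by continuity of the preintegral. *)
Lemma lim_I_down_le_lim_I_up (f : X -> R) g h gn hn :
  down_seq L g gn -> up_seq L h hn ->
  (forall x, (g x <= (f x)%:E)%E) -> (forall x, ((f x)%:E <= h x)%E) ->
  (lim ((fun n => (I (gn n))%:E) @ \oo) <= lim ((fun n => (I (hn n))%:E) @ \oo))%E.
Proof.
move=> [Lgn gn_dec gn_g] [Lhn hn_inc hn_h] gf fh.
have [[L0 _ _ Lmax _] [_ _ _ Icont]] := HLI.
pose gap n x := Num.max (gn n x - hn n x) 0.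
have Lgap n : L (gap n) by apply: (Lmax _ (fun _ => 0)) => //; exact: L_sub.
have gap_dec x n : gap n.+1 x <= gap n x.
  by rewrite /gap ge_max !le_max lexx orbT andbT; apply/orP; left; exact: lerB.
have gap_cvg0 x : (fun n => gap n x) @ \oo --> (0 : R).
  exact: (positive_gap_cvg0 (gn_dec x) (hn_inc x) (gn_g x) (hn_h x) (gf x) (fh x)).
apply: (lim_le_up_to_null _ _ (Icont gap Lgap gap_dec gap_cvg0)) => n.
- by apply: I_le => // x; exact: gn_dec.
- by apply: I_le => // x; exact: hn_inc.
- rewrite -lerBlDl -I_sub //; apply: I_le => //; first exact: L_sub.
  by move=> x; rewrite /gap le_max lexx.
Qed.

Lemma lower_le_upper (f : X -> R) :
  (lower_integral L I (fun x => (f x)%:E) <= upper_integral L I (fun x => (f x)%:E))%E.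
Proof.
apply: ge_ereal_sup => _ [g [_ gf] <-]; apply: le_ereal_inf_tmp => _ [h [_ fh] <-].
apply: ge_ereal_sup => _ [gn Hg <-]; apply: le_ereal_inf_tmp => _ [hn Hh <-].
exact: lim_I_down_le_lim_I_up Hg Hh gf fh.
Qed.

End LowerLeUpper.

Section Transfer.
Variables (R : realType) (X Y : Type) (L : set (X -> R)) (I : (X -> R) -> R)
  (M : set (Y -> R)) (J : (Y -> R) -> R) (rho : X -> R) (phi : X -> Y).
Hypothesis rho_ge0 : forall x, 0 <= rho x.
Hypothesis T_integral : forall g, M g -> L (fun x => rho x * g (phi x)) /\
                    I (fun x => rho x * g (phi x)) = J g.

Definition pullback (g : Y -> R) : X -> R := fun x => rho x * g (phi x).
Definition epullback (h : Y -> \bar R) : X -> \bar R :=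
  fun x => ((rho x)%:E * h (phi x))%E.

Lemma epullback_EFin (g : Y -> R) x :
  epullback (fun y => (g y)%:E) x = (pullback g x)%:E.
Proof. by rewrite /epullback EFinM. Qed.

Lemma pullback_cvg (hn : nat -> Y -> R) h x :
  (fun n => (hn n (phi x))%:E) @ \oo --> h (phi x) ->
  (fun n => (pullback (hn n) x)%:E) @ \oo --> epullback h x.
Proof. by move=> hn_h; under eq_fun do rewrite EFinM; exact: cvgeZl. Qed.

Lemma I_pullback_seq (hn : nat -> Y -> R) : (forall n, M (hn n)) ->
  (fun n => (I (pullback (hn n)))%:E) = (fun n => (J (hn n))%:E).
Proof. by move=> Mhn; apply: funext => n; case: (T_integral (Mhn n)) => _ ->. Qed.

Lemma up_seq_pullback h hn : up_seq M h hn ->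
  up_seq L (epullback h) (fun n => pullback (hn n)).
Proof.
case=> Mhn hn_inc hn_h; split.
- by move=> n; case: (T_integral (Mhn n)).
- by move=> x n; apply: ler_wpM2l.
- by move=> x; exact: pullback_cvg.
Qed.

Lemma down_seq_pullback h hn : down_seq M h hn ->
  down_seq L (epullback h) (fun n => pullback (hn n)).
Proof.
case=> Mhn hn_dec hn_h; split.
- by move=> n; case: (T_integral (Mhn n)).
- by move=> x n; apply: ler_wpM2l.
- by move=> x; exact: pullback_cvg.
Qed.

Lemma Iup_pullback h : (Iup L I (epullback h) <= Iup M J h)%E.
Proof.
apply: le_ereal_inf_tmp => _ [hn Hhn <-]; apply: ereal_inf_lbound.
exists (fun n => pullback (hn n)); first exact: up_seq_pullback.
by case: Hhn => Mhn _ _; rewrite I_pullback_seq.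
Qed.

Lemma Idown_pullback h : (Idown M J h <= Idown L I (epullback h))%E.
Proof.
apply: ge_ereal_sup => _ [hn Hhn <-]; apply: ereal_sup_ubound.
exists (fun n => pullback (hn n)); first exact: down_seq_pullback.
by case: Hhn => Mhn _ _; rewrite I_pullback_seq.
Qed.

(* Pulling back a dominating function of L_up gives a dominating function. *)
Lemma upper_pullback (f : Y -> R) :
  (upper_integral L I (fun x => (pullback f x)%:E) <=
   upper_integral M J (fun y => (f y)%:E))%E.
Proof.
apply: le_ereal_inf_tmp => _ [h [[hn Hhn] fh] <-].
apply: le_trans (Iup_pullback h); apply: ereal_inf_lbound.
exists (epullback h) => //; split; first by exists (fun n => pullback (hn n)); exact: up_seq_pullback.
by move=> x; rewrite -epullback_EFin; apply: lee_wpmul2l; rewrite ?lee_fin.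
Qed.

Lemma lower_pullback (f : Y -> R) :
  (lower_integral M J (fun y => (f y)%:E) <=
   lower_integral L I (fun x => (pullback f x)%:E))%E.
Proof.
apply: ge_ereal_sup => _ [h [[hn Hhn] hf] <-].
apply: le_trans (Idown_pullback h) _; apply: ereal_sup_ubound.
exists (epullback h) => //; split; first by exists (fun n => pullback (hn n)); exact: down_seq_pullback.
by move=> x; rewrite -epullback_EFin; apply: lee_wpmul2l; rewrite ?lee_fin.
Qed.

End Transfer.

Theorem mainTheorem11 (R : realType) (X Y : Type)
  (L : set (X -> R)) (I : (X -> R) -> R)
  (M : set (Y -> R)) (J : (Y -> R) -> R)
  (rho : X -> R) (phi : X -> Y) :
  integral_system L I -> integral_system M J ->
  (forall x, 0 <= rho x) ->
  (forall g, M g -> L (fun x => rho x * g (phi x)) /\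
                    I (fun x => rho x * g (phi x)) = J g) ->
  forall g, L1 M J g ->
    L1 L I (fun x => rho x * g (phi x)) /\
    I1 L I (fun x => rho x * g (phi x)) = I1 M J g.
Proof.
move=> HLI _ rho_ge0 T_integral g [lowM_upM upM_fin].
have upper_le := upper_pullback rho_ge0 T_integral g.
have lower_ge := lower_pullback rho_ge0 T_integral g.
have lowL_upL := lower_le_upper HLI (pullback rho phi g).
(* The chain lower(M) <= lower(L) <= upper(L) <= upper(M) = lower(M) collapses. *)
have upL_upM : upper_integral L I (fun x => (pullback rho phi g x)%:E) =
               upper_integral M J (fun y => (g y)%:E).
  by apply/le_anti; rewrite upper_le -lowM_upM (le_trans lower_ge lowL_upL).
have lowL_upM : lower_integral L I (fun x => (pullback rho phi g x)%:E) =
                upper_integral M J (fun y => (g y)%:E).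
  by apply/le_anti; rewrite -{1}upL_upM lowL_upL -lowM_upM lower_ge.
by split; [split; rewrite /= ?upL_upM ?lowL_upM | rewrite /I1 upL_upM].
Qed.
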